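(* Let $q=2^f\geq 4$ and $I=\{0,\ f,\ 2f/\gcd(3,f),\ 4f/\gcd(3,f)\}$. Let $b\in\mathbb{F}_{q^2}^\times$ with $b+b^q=1$ and $b^{q+1}\neq 1$, and let $a\in\mathbb{F}_{q^2}^\times$ have order $q+1$ and satisfy: $(1+b+b^2)^{2^i}\neq a+a^{-1}+1$ for all $i\in I$; $(1+b+b^2)^{2^i}\neq a(1+b+b^3+b^4)+a^{-1}(b^2+b^3+b^4)$ for all $i\in I$; $a+a^{-1}+1\neq a(1+b+b^3+b^4)+a^{-1}(b^2+b^3+b^4)$; and $a+a^{-1}+1\neq 0$. Let \[ X=\begin{pmatrix}b&1&1\\ b^q&0&1\\ b^{q+1}&b&b^q\end{pmatrix},\quad Y=\begin{pmatrix}ab+a^{-1}b^q&0&a(b+b^{q+1})+a^{-1}(b^q+b^{q+1})\\ 0&1&0\\ a+a^{-1}&0&ab+a^{-1}b^q\end{pmatrix},\quad Z=\begin{pmatrix}1&0&1\\ 0&1&0\\ 0&0&1\end{pmatrix}, \] which lie in $\mathrm{SU}_3(q)$, and let $x,y,z$ be their images under the natural projection $\eta:\mathrm{SU}_3(q)\to\mathrm{PSU}_3(q)$. Then $x,y,z$ each have order $2$, and $zy$ has order $q+1$.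
   Context: Here $\mathrm{SU}_3(q)=\{A\in\mathrm{SL}_3(q^2): \overline{A}^{T}WA=W\}$, where $\overline{(a_{ij})}=(a_{ij}^q)$ and $W=\begin{pmatrix}0&0&1\\0&1&0\\1&0&0\end{pmatrix}$, and $\mathrm{PSU}_3(q)=\mathrm{SU}_3(q)/Z(\mathrm{SU}_3(q))$. *)

From HB Require Import structures.
From mathcomp Require Import all_boot all_order all_algebra all_fingroup all_solvable all_field.
Set Implicit Arguments. Unset Strict Implicit. Unset Printing Implicit Defensive.
Import GRing.Theory.
Local Open Scope ring_scope.

Definition mx3 (R : nzRingType) (a11 a12 a13 a21 a22 a23 a31 a32 a33 : R) : 'M[R]_3 :=
  \matrix_(i < 3, j < 3)
    nth 0 (nth [::] [:: [:: a11; a12; a13]; [:: a21; a22; a23]; [:: a31; a32; a33]] i) j.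

Definition Wmx (R : nzRingType) : 'M[R]_3 := mx3 0 0 1 0 1 0 1 0 0.

(* entrywise q-power (field automorphism of F_{q^2} of order 2) *)
Definition qbar (F : fieldType) (q : nat) (A : 'M[F]_3) : 'M[F]_3 :=
  map_mx (fun x => x ^+ q) A.

Definition SU3 (F : finFieldType) (q : nat) : {set {'GL_3[F]}} :=
  [set g : {'GL_3[F]} | (\det (val g) == 1)
                      && ((qbar q (val g))^T *m Wmx F *m val g == Wmx F)].

Definition etaPSU (F : finFieldType) (q : nat) (g : {'GL_3[F]}) :=
  coset 'Z(SU3 F q) g.

From HB Require Import structures.
From mathcomp Require Import all_boot all_order all_algebra all_fingroup all_solvable all_field.
From mathcomp Require Import ring.
Set Implicit Arguments.
Unset Strict Implicit.
Unset Printing Implicit Defensive.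
Import GRing.Theory FinRing.Theory.
Local Open Scope ring_scope.

(* Over F_(q^2) of characteristic 2 one has b^q = 1 + b and a^q = a^-1, after
   which X, Y, Z are checked to be unitary involutions of determinant 1.  An
   element g of SU_3(q) has order n in PSU_3(q) when g^n = 1 and no g^k with
   0 < k < n is central; non-centrality is witnessed by Z, since a matrix
   commuting with Z has a zero (3,1) entry.  ZY fixes e_2 and has eigenvalues
   a, a^-1 on <e_1, e_3>, so (ZY)^(q+1) = 1, while the (3,1) entry of (ZY)^k
   is a^k + a^-k, which vanishes only when q+1 divides 2k, i.e. k (q+1 is odd). *)

Section Mx3.
Variable R : comNzRingType.

Lemma mul_mx3 (a11 a12 a13 a21 a22 a23 a31 a32 a33
               b11 b12 b13 b21 b22 b23 b31 b32 b33 : R) :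
  mx3 a11 a12 a13 a21 a22 a23 a31 a32 a33 *m mx3 b11 b12 b13 b21 b22 b23 b31 b32 b33 =
  mx3 (a11*b11 + a12*b21 + a13*b31) (a11*b12 + a12*b22 + a13*b32) (a11*b13 + a12*b23 + a13*b33)
      (a21*b11 + a22*b21 + a23*b31) (a21*b12 + a22*b22 + a23*b32) (a21*b13 + a22*b23 + a23*b33)
      (a31*b11 + a32*b21 + a33*b31) (a31*b12 + a32*b22 + a33*b32) (a31*b13 + a32*b23 + a33*b33).
Proof.
apply/matrixP => i j; rewrite !mxE !big_ord_recr big_ord0 /= !mxE add0r.
by case: i => [[|[|[|i]]] Hi]; case: j => [[|[|[|j]]] Hj].
Qed.

Lemma trmx_mx3 (a11 a12 a13 a21 a22 a23 a31 a32 a33 : R) :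
  (mx3 a11 a12 a13 a21 a22 a23 a31 a32 a33)^T = mx3 a11 a21 a31 a12 a22 a32 a13 a23 a33.
Proof.
apply/matrixP => i j; rewrite !mxE.
by case: i => [[|[|[|i]]] Hi]; case: j => [[|[|[|j]]] Hj].
Qed.

Lemma map_mx3 (g : R -> R) (a11 a12 a13 a21 a22 a23 a31 a32 a33 : R) :
  map_mx g (mx3 a11 a12 a13 a21 a22 a23 a31 a32 a33) =
  mx3 (g a11) (g a12) (g a13) (g a21) (g a22) (g a23) (g a31) (g a32) (g a33).
Proof.
apply/matrixP => i j; rewrite !mxE.
by case: i => [[|[|[|i]]] Hi]; case: j => [[|[|[|j]]] Hj].
Qed.

Lemma scale_mx3 (c a11 a12 a13 a21 a22 a23 a31 a32 a33 : R) :
  c *: mx3 a11 a12 a13 a21 a22 a23 a31 a32 a33 =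
  mx3 (c * a11) (c * a12) (c * a13) (c * a21) (c * a22) (c * a23)
      (c * a31) (c * a32) (c * a33).
Proof.
apply/matrixP => i j; rewrite !mxE.
by case: i => [[|[|[|i]]] Hi]; case: j => [[|[|[|j]]] Hj].
Qed.

Lemma mx3_1 : (1 : 'M[R]_3) = mx3 1 0 0 0 1 0 0 0 1.
Proof.
apply/matrixP => i j; rewrite !mxE.
by case: i => [[|[|[|i]]] Hi]; case: j => [[|[|[|j]]] Hj].
Qed.

Lemma det_mx3 (a11 a12 a13 a21 a22 a23 a31 a32 a33 : R) :
  \det (mx3 a11 a12 a13 a21 a22 a23 a31 a32 a33) =
  a11 * (a22 * a33 - a23 * a32) - a12 * (a21 * a33 - a23 * a31)
  + a13 * (a21 * a32 - a22 * a31).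
Proof.
rewrite (expand_det_row _ ord0) !big_ord_recr big_ord0 /= add0r.
rewrite /cofactor !(expand_det_row _ ord0) !big_ord_recr big_ord0 /= !add0r.
by rewrite /cofactor !det_mx11 !mxE /= !big_ord0 /= !add0r; ring.
Qed.

Definition Zmx : 'M[R]_3 := mx3 1 0 1 0 1 0 0 0 1.

Lemma mx3_commute_Zmx (a11 a12 a13 a21 a22 a23 a31 a32 a33 : R) :
  let A := mx3 a11 a12 a13 a21 a22 a23 a31 a32 a33 in
  A *m Zmx = Zmx *m A -> a31 = 0.
Proof.
rewrite /Zmx !mul_mx3 => /(congr1 (fun A : 'M_3 => A 0 0)); rewrite !mxE /= => e.
have -> : a31 = (1 * a11 + 0 * a21 + 1 * a31) - (a11 * 1 + a12 * 0 + a13 * 0) by ring.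
by rewrite e subrr.
Qed.

End Mx3.

Section CosetOrder.
Local Open Scope group_scope.
Variables (gT : finGroupType) (H : {group gT}).

Lemma order_coset g n : g \in 'N(H) -> (0 < n)%N -> g ^+ n = 1 ->
  (forall k, (0 < k < n)%N -> g ^+ k \notin H) -> #[coset H g] = n.
Proof.
move=> gN n_gt0 gn1 gkH; have cosetX k : coset H g ^+ k = coset H (g ^+ k).
  by rewrite morphX.
have ord_le : (#[coset H g] <= n)%N.
  by rewrite dvdn_leq // order_dvdn cosetX gn1 morph1.
apply/eqP; rewrite eqn_leq ord_le leqNgt; apply/negP => ord_lt.
have /coset_idr : g ^+ #[coset H g] \in 'N(H) by rewrite groupX.
rewrite -cosetX expg_order => /(_ erefl); apply/negP/gkH.
by rewrite order_gt0 ord_lt.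
Qed.

End CosetOrder.

Section GLCenter.
Variables (F : finFieldType) (n : nat) (G : {group {'GL_n.+1[F]}}).

Lemma GL_notin_center (g h : {'GL_n.+1[F]}) :
  h \in G -> val g *m val h != val h *m val g -> g \notin 'Z(G)%g.
Proof.
move=> hG; apply: contra => /centerP[_ /(_ h hG) cgh].
by apply/eqP; exact: (congr1 val cgh).
Qed.

End GLCenter.

Section SU3Group.
Variables (F : finFieldType) (q : nat).
Hypothesis q_pchar : [pchar F].-nat q.

Lemma frobD (x y : F) : (x + y) ^+ q = x ^+ q + y ^+ q.
Proof. exact: exprDn_pchar. Qed.

Lemma frob0 : (0 : F) ^+ q = 0.
Proof. by case/andP: q_pchar => q_gt0 _; rewrite -(prednK q_gt0) exprS mul0r. Qed.

Lemma qbarM (A B : 'M[F]_3) : qbar q (A *m B) = qbar q A *m qbar q B.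
Proof.
apply/matrixP => i j; rewrite !mxE (big_morph _ frobD frob0).
by apply: eq_bigr => k _; rewrite !mxE exprMn.
Qed.

Lemma qbar1 : qbar q (1 : 'M[F]_3) = 1.
Proof.
by apply/matrixP => i j; rewrite !mxE; case: (i == j); rewrite ?expr1n ?frob0.
Qed.

Lemma group_set_SU3 : group_set (SU3 F q).
Proof.
apply/group_setP; split=> [|x y].
  by rewrite inE det1 qbar1 trmx1 mul1mx mulmx1 !eqxx.
rewrite !inE /= => /andP[/eqP dx /eqP wx] /andP[/eqP dy /eqP wy].
rewrite -mulmxE det_mulmx dx dy mulr1 eqxx qbarM trmx_mul /=.
by rewrite mulmxA -!(mulmxA (qbar q (val y))^T) wx mulmxA wy.
Qed.

Definition SU3_group := Group group_set_SU3.

Lemma SU3_of_mx (A : 'M[F]_3) :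
  \det A = 1 -> (qbar q A)^T *m Wmx F *m A = Wmx F ->
  exists2 g : {'GL_3[F]}, val g = A & g \in SU3 F q.
Proof.
move=> detA unitA; have uA : A \is a GRing.unit by rewrite unitmxE detA unitr1.
by exists (Sub A uA); rewrite ?inE SubK // detA unitA !eqxx.
Qed.

Lemma SU3_norm_center (g : {'GL_3[F]}) : g \in SU3 F q -> g \in 'N('Z(SU3 F q))%g.
Proof. exact: subsetP (normal_norm (center_normal SU3_group)) g. Qed.

Lemma etaPSUM (g h : {'GL_3[F]}) : g \in SU3 F q -> h \in SU3 F q ->
  (etaPSU q g * etaPSU q h)%g = etaPSU q (g * h)%g.
Proof. by move=> gG hG; rewrite /etaPSU -morphM ?SU3_norm_center. Qed.

Lemma order_etaPSU (g : {'GL_3[F]}) n : g \in SU3 F q -> (0 < n)%N -> val g ^+ n = 1 ->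
  (forall k, (0 < k < n)%N ->
     exists2 h, h \in SU3 F q & val g ^+ k *m val h != val h *m val g ^+ k) ->
  #[etaPSU q g]%g = n.
Proof.
move=> gG n_gt0 gn1 noncentral; rewrite /etaPSU -[SU3 F q]/(gval SU3_group).
apply: order_coset => //; first exact: SU3_norm_center.
  by apply: val_inj; rewrite val_unitX gn1.
move=> k /noncentral[h hG]; rewrite -val_unitX; exact: GL_notin_center.
Qed.

Lemma order_etaPSU_involution (g h : {'GL_3[F]}) : g \in SU3 F q -> h \in SU3 F q ->
  val g ^+ 2 = 1 -> val g *m val h != val h *m val g -> #[etaPSU q g]%g = 2%N.
Proof.
move=> gG hG g2 ngh; apply: (order_etaPSU gG) => // - [|[|//]] // _.
by exists h; rewrite ?expr1.
Qed.

End SU3Group.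

Section Char2.
Variable F : fieldType.
Hypothesis pchar2 : 2 \in [pchar F].

Lemma natr_even_pchar2 n : ((2 * n)%N%:R : F) = 0.
Proof. by rewrite natrM (pcharf0 pchar2) mul0r. Qed.

Lemma oppr_natr_even_pchar2 n : (- (2 * n)%N%:R : F) = 0.
Proof. by rewrite natr_even_pchar2 oppr0. Qed.

Lemma prim_root_addrXV_eq0 n (z : F) k : odd n -> n.-primitive_root z ->
  z ^+ k + z^-1 ^+ k = 0 -> (n %| k)%N.
Proof.
move=> n_odd z_prim /eqP; rewrite addr_eq0 oppr_pchar2 // => /eqP zk.
have z_neq0 : z != 0 by rewrite (prim_root_eq0 z_prim) -lt0n (prim_order_gt0 z_prim).
rewrite -(@Gauss_dvdl _ _ 2) ?coprimen2 // (prim_order_dvd z_prim).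
by rewrite exprM expr2 {1}zk -exprMn mulVf // expr1n.
Qed.

End Char2.

Section Lemma3p3.
Variables (F : finFieldType) (f q : nat).
Hypotheses (hq : q = (2 ^ f)%N) (hq4 : (4 <= q)%N) (hF : #|F| = (q ^ 2)%N).

Lemma pchar2 : 2 \in [pchar F].
Proof. by apply: (card_finPcharP (n := (f * 2)%N)); rewrite // hF hq expnM. Qed.

Lemma q_pchar : [pchar F].-nat q.
Proof. by rewrite hq pnatX (pnatE _ (isT : prime 2)) pchar2. Qed.

Lemma odd_q1 : odd q.+1.
Proof. by move: hq4; rewrite hq /= oddX; case: f. Qed.

Variables a b : F.
Hypotheses (hb0 : b != 0) (hbtr : b + b ^+ q = 1).
Hypotheses (ha0 : a != 0) (haord : q.+1.-primitive_root a).

Lemma frob_b : b ^+ q = 1 + b.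
Proof. by rewrite -hbtr addrAC addrr_pchar2 ?add0r // pchar2. Qed.

Lemma frob_a : a ^+ q = a^-1.
Proof. by apply: (mulfI ha0); rewrite -exprS (prim_expr_order haord) mulfV. Qed.

Lemma addrV_neq0 : a + a^-1 != 0.
Proof.
apply/eqP; have := prim_root_addrXV_eq0 pchar2 odd_q1 haord (k := 1).
by rewrite !expr1 dvdn1 eqSS => /[apply] /eqP q0; move: hq4; rewrite q0.
Qed.

(* [ring:] only uses its equations as rewrite rules on the normal forms of the
   two sides, so the goal is moved to [p - q = 0] and each even coefficient
   that can occur there needs its own equation. *)
Ltac ring_pchar2 :=
  let e := constr:(natr_even_pchar2 pchar2) in
  let o := constr:(oppr_natr_even_pchar2 pchar2) in
  apply/eqP; rewrite -subr_eq0; apply/eqP;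
  ring: (mulfV ha0) (e 1) (e 2) (e 3) (e 4) (e 5) (e 6) (e 7) (e 8) (e 9) (e 10)
    (e 11) (e 12) (e 13) (e 14) (e 15) (e 16) (o 1) (o 2) (o 3) (o 4) (o 5) (o 6)
    (o 7) (o 8) (o 9) (o 10) (o 11) (o 12) (o 13) (o 14) (o 15) (o 16).

Ltac qbar_mx3 :=
  rewrite /qbar map_mx3
    !(exprMn, frobD q_pchar, frob0 q_pchar, expr1n, exprVn, frob_a, invrK, frob_b).

Definition Xmx := mx3 b 1 1 (b ^+ q) 0 1 (b ^+ q.+1) b (b ^+ q).

Definition Ymx :=
  mx3 (a * b + a^-1 * b ^+ q) 0 (a * (b + b ^+ q.+1) + a^-1 * (b ^+ q + b ^+ q.+1))
      0 1 0
      (a + a^-1) 0 (a * b + a^-1 * b ^+ q).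

Lemma det_Xmx : \det Xmx = 1.
Proof. rewrite /Xmx exprS frob_b det_mx3; ring_pchar2. Qed.

Lemma unitary_Xmx : (qbar q Xmx)^T *m Wmx F *m Xmx = Wmx F.
Proof.
rewrite /Xmx exprS frob_b; qbar_mx3; rewrite trmx_mx3 /Wmx !mul_mx3.
by f_equal; ring_pchar2.
Qed.

Lemma det_Ymx : \det Ymx = 1.
Proof. rewrite /Ymx exprS frob_b det_mx3; ring_pchar2. Qed.

Lemma unitary_Ymx : (qbar q Ymx)^T *m Wmx F *m Ymx = Wmx F.
Proof.
rewrite /Ymx exprS frob_b; qbar_mx3; rewrite trmx_mx3 /Wmx !mul_mx3.
by f_equal; ring_pchar2.
Qed.

Lemma det_Zmx : \det (Zmx F) = 1.
Proof. rewrite /Zmx det_mx3; ring_pchar2. Qed.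

Lemma unitary_Zmx : (qbar q (Zmx F))^T *m Wmx F *m Zmx F = Wmx F.
Proof. rewrite /Zmx; qbar_mx3; rewrite trmx_mx3 /Wmx !mul_mx3; by f_equal; ring_pchar2. Qed.

Lemma sqr_Xmx : Xmx ^+ 2 = 1.
Proof. rewrite expr2 -mulmxE /Xmx exprS frob_b mul_mx3 mx3_1; by f_equal; ring_pchar2. Qed.

Lemma sqr_Ymx : Ymx ^+ 2 = 1.
Proof. rewrite expr2 -mulmxE /Ymx exprS frob_b mul_mx3 mx3_1; by f_equal; ring_pchar2. Qed.

Lemma sqr_Zmx : Zmx F ^+ 2 = 1.
Proof. rewrite expr2 -mulmxE /Zmx mul_mx3 mx3_1; by f_equal; ring_pchar2. Qed.

Lemma Xmx_Zmx_noncommute : Xmx *m Zmx F != Zmx F *m Xmx.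
Proof. by apply/eqP => /mx3_commute_Zmx /eqP; rewrite expf_eq0 (negbTE hb0) andbF. Qed.

Lemma Ymx_Zmx_noncommute : Ymx *m Zmx F != Zmx F *m Ymx.
Proof. by apply/eqP => /mx3_commute_Zmx /eqP; rewrite (negbTE addrV_neq0). Qed.

(* (ZY)^k = a^k E + a^-k E' + E_2, with E, E' the spectral projections of ZY
   on <e_1, e_3> and E_2 the one onto <e_2>; scaling by (a + a^-1)^2 clears
   the denominators of E and E'. *)
Definition scaled_powZY k :=
  let c := a + a^-1 in let d := a * b + a^-1 * b ^+ q in
  let x := a ^+ k in let y := a^-1 ^+ k in
  mx3 (c * ((d + a) * x + (d + a^-1) * y)) 0 ((d + a) * (d + a^-1) * (x + y))
      0 (c ^+ 2) 0
      (c ^+ 2 * (x + y)) 0 (c * ((d + a^-1) * x + (d + a) * y)).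

Lemma scale_powZY k : (a + a^-1) ^+ 2 *: (Zmx F *m Ymx) ^+ k = scaled_powZY k.
Proof.
elim: k => [|k IH].
  rewrite expr0 mx3_1 scale_mx3 /scaled_powZY !expr0 frob_b.
  by f_equal; ring_pchar2.
rewrite [_ ^+ k.+1]exprSr -mulmxE scalemxAl IH /scaled_powZY /Zmx /Ymx.
by rewrite (exprS b q) frob_b !mul_mx3 !exprSr; f_equal; ring_pchar2.
Qed.

Lemma powZY_order : (Zmx F *m Ymx) ^+ q.+1 = 1.
Proof.
apply: (scalerI (expf_neq0 2 addrV_neq0)).
rewrite scale_powZY /scaled_powZY exprVn (prim_expr_order haord) invr1.
by rewrite mx3_1 scale_mx3 frob_b; f_equal; ring_pchar2.
Qed.

Lemma powZY_commute_Zmx k :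
  (Zmx F *m Ymx) ^+ k *m Zmx F = Zmx F *m (Zmx F *m Ymx) ^+ k -> (q.+1 %| k)%N.
Proof.
move=> /(congr1 ( *:%R ((a + a^-1) ^+ 2))); rewrite scalemxAl scalemxAr scale_powZY.
move=> /mx3_commute_Zmx /eqP; rewrite mulf_eq0 expf_eq0 (negbTE addrV_neq0) /= => /eqP.
exact: (prim_root_addrXV_eq0 pchar2 odd_q1 haord).
Qed.

Lemma PSU3_involutions_ZY_order :
  exists gX gY gZ : {'GL_3[F]},
    [/\ val gX = Xmx, val gY = Ymx, val gZ = Zmx F,
        [/\ gX \in SU3 F q, gY \in SU3 F q & gZ \in SU3 F q] &
        [/\ #[etaPSU q gX]%g = 2%N, #[etaPSU q gY]%g = 2%N, #[etaPSU q gZ]%g = 2%N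
          & #[(etaPSU q gZ * etaPSU q gY)%g]%g = q.+1]].
Proof.
have [gX eX sX] := SU3_of_mx det_Xmx unitary_Xmx.
have [gY eY sY] := SU3_of_mx det_Ymx unitary_Ymx.
have [gZ eZ sZ] := SU3_of_mx det_Zmx unitary_Zmx.
exists gX, gY, gZ; split=> //; split.
- by apply: (order_etaPSU_involution q_pchar sX sZ);
    rewrite eX ?eZ ?sqr_Xmx ?Xmx_Zmx_noncommute.
- by apply: (order_etaPSU_involution q_pchar sY sZ);
    rewrite eY ?eZ ?sqr_Ymx ?Ymx_Zmx_noncommute.
- by apply: (order_etaPSU_involution q_pchar sZ sY);
    rewrite eZ ?eY ?sqr_Zmx // eq_sym Ymx_Zmx_noncommute.
have sZY : (gZ * gY)%g \in SU3 F q by exact: (@groupM _ (SU3_group q_pchar)).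
have eZY : val (gZ * gY)%g = Zmx F *m Ymx by rewrite -eZ -eY.
rewrite (etaPSUM q_pchar) //; apply: (order_etaPSU q_pchar sZY) => //.
  by rewrite eZY powZY_order.
move=> k /andP[k_gt0 k_lt]; exists gZ => //; rewrite eZY eZ.
by apply/negP => /eqP /powZY_commute_Zmx /(dvdn_leq k_gt0); rewrite leqNgt k_lt.
Qed.

End Lemma3p3.

Theorem lemma3p3 (f q : nat) (hq : q = (2 ^ f)%N) (hq4 : (4 <= q)%N)
  (F : finFieldType) (hF : #|F| = (q ^ 2)%N) (a b : F)
  (hb0 : b != 0) (hbtr : b + b ^+ q = 1) (hbn : b ^+ q.+1 != 1)
  (ha0 : a != 0) (haord : (q.+1).-primitive_root a)
  (h1 : forall i : nat,
      i \in [:: 0%N; f; (2 * f %/ gcdn 3 f)%N; (4 * f %/ gcdn 3 f)%N] ->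
      (1 + b + b ^+ 2) ^+ (2 ^ i) != a + a^-1 + 1)
  (h2 : forall i : nat,
      i \in [:: 0%N; f; (2 * f %/ gcdn 3 f)%N; (4 * f %/ gcdn 3 f)%N] ->
      (1 + b + b ^+ 2) ^+ (2 ^ i)
        != a * (1 + b + b ^+ 3 + b ^+ 4) + a^-1 * (b ^+ 2 + b ^+ 3 + b ^+ 4))
  (h3 : a + a^-1 + 1
        != a * (1 + b + b ^+ 3 + b ^+ 4) + a^-1 * (b ^+ 2 + b ^+ 3 + b ^+ 4))
  (h4 : a + a^-1 + 1 != 0) :
  let X := mx3 b 1 1
               (b ^+ q) 0 1
               (b ^+ q.+1) b (b ^+ q) in
  let Y := mx3 (a * b + a^-1 * b ^+ q) 0
                 (a * (b + b ^+ q.+1) + a^-1 * (b ^+ q + b ^+ q.+1))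
               0 1 0
               (a + a^-1) 0 (a * b + a^-1 * b ^+ q) in
  let Z := mx3 1 0 1
               0 1 0
               0 0 1 in
  exists gX gY gZ : {'GL_3[F]},
    [/\ val gX = X, val gY = Y, val gZ = Z,
        [/\ gX \in @SU3 F q, gY \in @SU3 F q & gZ \in @SU3 F q] &
        [/\ #[@etaPSU F q gX]%g = 2%N, #[@etaPSU F q gY]%g = 2%N, #[@etaPSU F q gZ]%g = 2%N
          & #[(@etaPSU F q gZ * @etaPSU F q gY)%g]%g = q.+1]].
Proof.
exact (PSU3_involutions_ZY_order hq hq4 hF hb0 hbtr ha0 haord). Qed.
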